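(* Let $V\subset\mathbb{R}^d$ be a finite antichain, $p\in S_V$, $v\in D_p$ with $v_i=p_i$, and assume $v$ is not an $i$-witness for $p$. Then either $p$ is not a characteristic point or $V$ is degenerate.
   Context: For $x,y\in\mathbb{R}^d$, $x\le y$ (dominance order) means $x_i\le y_i$ for all $i$; $y\rhd x$ means $y_i>x_i$ for all $i$; $y\rhd_i x$ means $y_i=x_i$ and $y_j>x_j$ for all $j\neq i$. $V\subset\mathbb{R}^d$ is a finite antichain in the dominance order (elements are called minima). The orthogonal surface $S_V$ is the topological boundary of $\langle V\rangle=\{x: x\ge v\text{ for some }v\in V\}$; equivalently $p\in S_V$ iff there is $v\in V$ with $v\le p$ and no $w\in V$ with $p\rhd w$. For $p\in S_V$, $D_p=\{v\in V:v\le p\}$ and for $v\in D_p$, $T_p(v)=\{i: p_i=v_i\}$. For $p\in S_V$, a minimum $v\in D_p$ is an $i$-witness for $p$ if there is $q\in S_V$ with $v\le p\le q$ and $q\rhd_i v$. Flats: $U_i(v)=\{p\in S_V: p\rhd_i v\}$; for $v,w\in V$ put $v\sim_i w$ iff $U_i(v)\cap U_i(w)\neq\emptyset$, and let $\sim_i^c$ be the reflexive–transitive closure; the $i$-flat of $v$ is $F_i(v)=\overline{\bigcup_{w\sim_i^c v}U_i(w)}$ (topological closure), and an $i$-flat is any set of this form. A characteristic point is a point of $S_V$ that lies in some $i$-flat for every $i\in\{1,\dots,d\}$. $V$ is degenerate if there exist a characteristic point $p$, minima $x,u,v\in D_p$ and coordinates $i\neq j$ with $u_i<v_i=x_i=p_i$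 and $v_j<u_j=x_j=p_j$; otherwise $V$ is non-degenerate. *)

(* Points of R^d are row vectors 'rV[R]_d, whose
   topology is the usual (product / sup-norm) topology of R^d. *)
From HB Require Import structures.
From mathcomp Require Import all_boot all_order all_algebra.
From mathcomp Require Import all_classical all_reals all_analysis.
From Stdlib Require Import Relations.
Import numFieldTopology.Exports numFieldNormedType.Exports.
Set Implicit Arguments. Unset Strict Implicit. Unset Printing Implicit Defensive.
Import Order.TTheory GRing.Theory Num.Theory.
Local Open Scope classical_set_scope.
Local Open Scope ring_scope.

Section OrthSurf.
Variables (R : realType) (d : nat).
Notation pt := 'rV[R]_d.
Definition pcoord (x : pt) (i : 'I_d) : R := x ord0 i.

Definition dle (x y : pt) : Prop := forall i, pcoord x i <= pcoord y i.
Definition dgt (y x : pt) : Prop := forall i, pcoord x i < pcoord y i.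
Definition dgt_i (i : 'I_d) (y x : pt) : Prop :=
  pcoord y i = pcoord x i /\ forall j, j != i -> pcoord x j < pcoord y j.

Definition antichain (V : set pt) : Prop :=
  forall x y, V x -> V y -> dle x y -> x = y.

Variable V : set pt.

(* orthogonal surface S_V (characterization given in the paper) *)
Definition surf : set pt :=
  [set p | (exists v, V v /\ dle v p) /\ ~ (exists w, V w /\ dgt p w)].

Definition Dp (p : pt) : set pt := [set v | V v /\ dle v p].

Definition Tp (p v : pt) : set 'I_d := [set i | pcoord p i = pcoord v i].

Definition witness (i : 'I_d) (p v : pt) : Prop :=
  Dp p v /\ exists q, surf q /\ dle v p /\ dle p q /\ dgt_i i q v.

Definition Uflat (i : 'I_d) (v : pt) : set pt := [set p | surf p /\ dgt_i i p v].

Definition sim (i : 'I_d) (v w : pt) : Prop :=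
  V v /\ V w /\ (Uflat i v `&` Uflat i w) !=set0.

Definition simc (i : 'I_d) : relation pt := clos_refl_trans pt (sim i).

Definition flat (i : 'I_d) (v : pt) : set pt :=
  closure (T := 'rV[R]_d) [set p | exists w, simc i w v /\ Uflat i w p].

Definition is_flat (i : 'I_d) (F : set pt) : Prop := exists v, V v /\ F = flat i v.

Definition characteristic (p : pt) : Prop :=
  surf p /\ forall i : 'I_d, exists F, is_flat i F /\ F p.

Definition degenerate : Prop :=
  exists p x u v (i j : 'I_d),
    [/\ characteristic p, Dp p x, Dp p u, Dp p v & i != j] /\
    (pcoord u i < pcoord v i /\ pcoord v i = pcoord x i /\ pcoord x i = pcoord p i) /\
    (pcoord v j < pcoord u j /\ pcoord u j = pcoord x j /\ pcoord x j = pcoord p j).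

End OrthSurf.

(* Let e > 0 be smaller than every nonzero gap |w_m - p_m| between a coordinate
   of a minimum w and the same coordinate of p, so that minima "within e of p"
   in a coordinate actually agree with p there.  Call w a blocker if w <= p,
   w_i < p_i, and w_m = p_m (m <> i) forces v_m = p_m.  Without a blocker,
   raising p by e in the coordinates m <> i with v_m = p_m gives a point q of
   S_V with q |>_i v, so v is an i-witness.  With a blocker w' and p in the
   i-flat, pick r in a flat piece U_i(w) within e of p; then w <= p,
   w_i = p_i, and since r is on the surface some coordinate m <> i has
   r_m <= w'_m, whence w'_m = v_m = p_m > w_m: the triple (v, w', w) with
   coordinates i and m is degenerate. *)
From HB Require Import structures.
From mathcomp Require Import all_boot all_order all_algebra.
From mathcomp Require Import all_classical all_reals all_analysis.
From mathcomp Require Import lra.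
From Stdlib Require Import Relations.
Import numFieldTopology.Exports numFieldNormedType.Exports.
Set Implicit Arguments. Unset Strict Implicit. Unset Printing Implicit Defensive.
Import Order.TTheory GRing.Theory Num.Theory.
Local Open Scope classical_set_scope.
Local Open Scope ring_scope.

Lemma seq_norm_gap (R : realDomainType) (s : seq R) :
  exists2 e : R, 0 < e & forall x, x \in s -> x != 0 -> e <= `|x|.
Proof.
elim: s => [|x s [e e0 He]]; first by exists 1.
have [->|xn0] := eqVneq x 0.
  by exists e => // y; rewrite inE => /orP[/eqP->|/He//]; rewrite eqxx.
exists (Order.min e `|x|); first by rewrite lt_min e0 normr_gt0.
move=> y; rewrite inE => /orP[/eqP->|ys] yn0; first by rewrite ge_min lexx orbT.
by rewrite ge_min He.
Qed.

Section OrthogonalSurface.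
Variables (R : realType) (d : nat) (V : set 'rV[R]_d).

Lemma coord_gap (p : 'rV[R]_d) : finite_set V ->
  exists2 e : R, 0 < e & forall w m, V w ->
    `|pcoord w m - pcoord p m| < e -> pcoord w m = pcoord p m.
Proof.
move/finite_seqP => [s ->].
have [e e0 He] :=
  seq_norm_gap [seq pcoord w m - pcoord p m | w <- s, m <- enum 'I_d].
exists e => // w m /= ws lt_e; apply/eqP; rewrite -subr_eq0.
apply: contraTT lt_e => ne; rewrite -leNgt He //.
by apply/allpairsP; exists (w, m); rewrite /= mem_enum.
Qed.

Lemma simc_in i w v : simc V i w v -> V v -> V w.
Proof. by elim=> [x y [Vx _]|//|x y z _ IH1 _ IH2 /IH2/IH1]. Qed.

Lemma surf_le_coord r w : surf V r -> V w -> exists m, pcoord r m <= pcoord w m.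
Proof.
move=> [_ ndgt] Vw; apply: contrapT => hn; apply: ndgt; exists w; split=> // m.
by rewrite ltNge; apply/negP => le_rw; apply: hn; exists m.
Qed.

Lemma flat_approx i v p (e : R) : V v -> flat V i v p -> 0 < e ->
  exists w r, [/\ V w, Uflat V i w r & forall m, `|pcoord p m - pcoord r m| < e].
Proof.
move=> Vv flat_p e0.
have [r [[w [sw Uwr]] [_ pr]]] := flat_p (ball p e) (@nbhsx_ballx _ _ p e e0).
by exists w, r; split; [exact: simc_in sw Vv | | move=> m; exact: pr ord0 m].
Qed.

Section Gap.
Variables (p : 'rV[R]_d) (e : R).
Hypothesis e_gt0 : 0 < e.
Hypothesis gap : forall w m, V w ->
  `|pcoord w m - pcoord p m| < e -> pcoord w m = pcoord p m.

Lemma gap_le w m : V w -> pcoord w m < pcoord p m + e -> pcoord w m <= pcoord p m.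
Proof.
move=> Vw lt_we; rewrite leNgt; apply/negP => lt_pw.
suff: pcoord w m = pcoord p m by lra.
by apply: gap Vw _; rewrite gtr0_norm ?subr_gt0 //; lra.
Qed.

Lemma gap_ge w m : V w -> pcoord p m - e < pcoord w m -> pcoord p m <= pcoord w m.
Proof.
move=> Vw lt_ew; rewrite leNgt; apply/negP => lt_wp.
suff: pcoord w m = pcoord p m by lra.
by apply: gap Vw _; rewrite ltr0_norm ?subr_lt0 //; lra.
Qed.

Definition blocker i (v w : 'rV[R]_d) : Prop :=
  [/\ Dp V p w, pcoord w i < pcoord p i &
      forall m, m != i -> pcoord w m = pcoord p m -> pcoord v m = pcoord p m].

Section Raise.
Variables (i : 'I_d) (v : 'rV[R]_d).

Definition raised : 'rV[R]_d := \row_m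
  (if (m != i) && (pcoord v m == pcoord p m) then pcoord p m + e else pcoord p m).

Lemma raisedE m : pcoord raised m =
  if (m != i) && (pcoord v m == pcoord p m) then pcoord p m + e else pcoord p m.
Proof. by rewrite /pcoord mxE. Qed.

Lemma dle_raised : dle p raised.
Proof. by move=> m; rewrite raisedE; case: ifP => _; have := e_gt0; lra. Qed.

Lemma raised_dgt_i : dle v p -> pcoord v i = pcoord p i -> dgt_i i raised v.
Proof.
move=> vp vi; split=> [|m mi]; first by rewrite raisedE eqxx vi.
rewrite raisedE mi /=; have [->|ne] := eqP; first by have := e_gt0; lra.
by rewrite lt_neqAle vp andbT; apply/eqP.
Qed.

Lemma surf_raised : Dp V p v -> ~ (exists w, blocker i v w) -> surf V raised.
Proof.
move=> [Vv vp] noblock; split.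
  by exists v; split=> // m; apply: le_trans (vp m) (dle_raised m).
move=> [w [Vw raised_w]]; apply: noblock; exists w; split.
- split=> // m; have := raised_w m; rewrite raisedE.
  by case: ifP => _ lt_w; [apply: gap_le | apply: ltW].
- by have := raised_w i; rewrite raisedE eqxx.
- move=> m mi wm; have := raised_w m; rewrite raisedE mi wm /=.
  by case: eqP => // _; rewrite ltxx.
Qed.

Lemma witness_of_no_blocker : Dp V p v -> pcoord v i = pcoord p i ->
  ~ (exists w, blocker i v w) -> witness V i p v.
Proof.
move=> Dv vi noblock; have [_ vp] := Dv.
split=> //; exists raised; split; first exact: surf_raised.
by split=> //; split; [exact: dle_raised | exact: raised_dgt_i].
Qed.

End Raise.

Lemma flat_minimum_near i w r : V w -> Uflat V i w r ->
  (forall m, `|pcoord p m - pcoord r m| < e) ->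
  Dp V p w /\ pcoord w i = pcoord p i.
Proof.
move=> Vw [_ [ri rw]] pr.
have wi : pcoord w i = pcoord p i by apply: gap Vw _; rewrite -ri distrC.
split=> //; split=> // m; have [->|mi] := eqVneq m i; first by rewrite wi.
apply: gap_le => //; have := rw m mi; have := pr m; rewrite ltr_norml; lra.
Qed.

Lemma degenerate_of_blocker i v w' : characteristic V p -> Dp V p v ->
  pcoord v i = pcoord p i -> blocker i v w' -> degenerate V.
Proof.
move=> Cp Dv vi [Dw' w'i w'v].
have [_ [[v0 [Vv0 ->]] flat_p]] := Cp.2 i.
have [w [r [Vw Uwr pr]]] := flat_approx Vv0 flat_p e_gt0.
have [Dw wi] := flat_minimum_near Vw Uwr pr.
have [Sr [ri rw]] := Uwr.
have [m rw'] := surf_le_coord Sr Dw'.1.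
have mi : m != i by apply: contraTneq rw' => ->; rewrite ri wi -ltNge.
have w'm : pcoord w' m = pcoord p m.
  apply/le_anti; rewrite Dw'.2 (gap_ge Dw'.1) //.
  by have := pr m; rewrite ltr_norml; lra.
have lt_wm := rw m mi.
exists p, v, w', w, i, m; split; first by split=> //; rewrite eq_sym.
by split; split; rewrite ?wi ?vi ?w'm ?(w'v m mi w'm) //; lra.
Qed.

End Gap.

End OrthogonalSurface.

Theorem lemma4p7 (R : realType) (d : nat) (V : set 'rV[R]_d)
  (Vfin : finite_set V) (Vanti : antichain V)
  (p v : 'rV[R]_d) (i : 'I_d) :
  surf V p -> Dp V p v -> pcoord v i = pcoord p i -> ~ witness V i p v ->
  ~ characteristic V p \/ degenerate V.
Proof.
move=> _ Dv vi not_witness.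
have [e e_gt0 gap] := coord_gap p Vfin.
have [Cp|] := pselect (characteristic V p); [right | by left].
have [[w' block]|noblock] := pselect (exists w', blocker V p i v w').
  exact (degenerate_of_blocker e_gt0 gap Cp Dv vi block).
by case: not_witness; apply: witness_of_no_blocker e_gt0 gap _ _ Dv vi noblock.
Qed.
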